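(* Let $K$ be a field and let $T$ be a tree with at least two edges. Then there is a monomial order such that the cut ideal $I_T$ has a quadratic squarefree Gröbner basis. In particular, the corresponding initial ideal is squarefree.
   Context: For a finite simple graph $G$ with vertex set $V(G)$ and edge set $E(G)$, an unordered partition $A|B$ of $V(G)$ (into two sets, one of which may be empty) defines the cut $Cut(A|B)$, the set of edges with one endpoint in $A$ and the other in $B$. The cut ideal $I_G$ is the kernel of the $K$-algebra homomorphism $\phi_G: K[q_{A|B} : A|B \text{ unordered partition of } V(G)] \to K[s_{ij}, t_{ij} : \{i,j\} \in E(G)]$, $q_{A|B} \mapsto \prod_{\{i,j\}\in Cut(A|B)} s_{ij} \prod_{\{i,j\}\in E(G)\setminus Cut(A|B)} t_{ij}$. A squarefree Gröbner basis is a Gröbner basis consisting of binomials, each a difference of two squarefree monomials; quadratic means each binomial has degree two. *)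

From HB Require Import structures.
From mathcomp Require Import all_boot all_order all_algebra.
From mathcomp Require Export mpoly.
Set Implicit Arguments. Unset Strict Implicit. Unset Printing Implicit Defensive.
Import Order.TTheory GRing.Theory.
Local Open Scope ring_scope.

Definition simple_graph (V : finType) (E : rel V) : Prop :=
  ssrbool.symmetric E /\ ssrbool.irreflexive E.

Definition edges (V : finType) (E : rel V) : {set {set V}} :=
  [set [set x; y] | x in V, y in V & E x y].

Definition connected_graph (V : finType) (E : rel V) : Prop :=
  forall x y : V, connect E x y.

Definition acyclic_graph (V : finType) (E : rel V) : Prop :=
  forall c : seq V, ucycle E c -> (size c < 3)%N.

Definition is_tree (V : finType) (E : rel V) : Prop :=
  simple_graph E /\ connected_graph E /\ acyclic_graph E.

(* an unordered partition A|B of V (one block possibly empty) is the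
   unordered pair {A, V \ A} *)
Definition is_upart (V : finType) (P : {set {set V}}) : bool :=
  [exists A : {set V}, P == [set A; ~: A]].

Definition upart (V : finType) := {P : {set {set V}} | is_upart P}.

Definition in_cut (V : finType) (P : upart V) (e : {set V}) : bool :=
  [exists A in val P, [exists i in e, [exists j in e, (i \in A) && (j \notin A)]]].

Definition edge_t (V : finType) (E : rel V) := {e : {set V} | e \in edges E}.

(* source ring K[q_{A|B}] : one variable per unordered partition *)
Definition qring (K : fieldType) (V : finType) := {mpoly K[#|{: upart V}|]}.
(* target ring K[s_e, t_e : e in E(G)] : variables indexed by edge + edge,
   inl e = s_e, inr e = t_e *)
Definition string (K : fieldType) (V : finType) (E : rel V) :=
  {mpoly K[#|{: (edge_t E + edge_t E)%type}|]}.

Definition s_var (K : fieldType) (V : finType) (E : rel V) (e : edge_t E)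
  : string K E := 'X_(enum_rank (inl e : (edge_t E + edge_t E)%type)).
Definition t_var (K : fieldType) (V : finType) (E : rel V) (e : edge_t E)
  : string K E := 'X_(enum_rank (inr e : (edge_t E + edge_t E)%type)).

Definition phi_q (K : fieldType) (V : finType) (E : rel V)
  (i : 'I_#|{: upart V}|) : string K E :=
  let P := enum_val i in
  \prod_(e : edge_t E) (if in_cut P (val e) then s_var K e else t_var K e).

Definition phi_G (K : fieldType) (V : finType) (E : rel V) (f : qring K V)
  : string K E := mmap (fun c : K => c%:MP) (phi_q K E) f.

Definition cut_ideal (K : fieldType) (V : finType) (E : rel V)
  : pred (qring K V) := fun f => phi_G E f == 0.

Definition monomial_order (n : nat) (le : rel 'X_{1..n}) : Prop :=
  [/\ ssrbool.reflexive le, ssrbool.antisymmetric le, ssrbool.transitive le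
    & ssrbool.total le] /\
  (forall m, le 0%MM m) /\
  (forall m1 m2 m, le m1 m2 -> le (m1 + m)%MM (m2 + m)%MM).

Definition is_lm (K : fieldType) (n : nat) (le : rel 'X_{1..n})
  (p : {mpoly K[n]}) (m : 'X_{1..n}) : Prop :=
  m \in msupp p /\ (forall m', m' \in msupp p -> le m' m).

(* G is a Groebner basis of I w.r.t. le: G is contained in I and the leading
   monomials of G generate the initial ideal in_le(I), i.e. the leading monomial
   of every nonzero f in I is divisible by the leading monomial of some g in G *)
Definition groebner_basis (K : fieldType) (n : nat) (le : rel 'X_{1..n})
  (I : pred {mpoly K[n]}) (G : seq {mpoly K[n]}) : Prop :=
  (forall g, g \in G -> I g) /\
  (forall f, I f -> f != 0 ->
     exists2 g, g \in G &
       exists mf mg, [/\ is_lm le f mf, is_lm le g mg & (mg <= mf)%MM]).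

Definition squarefree_mono (n : nat) (m : 'X_{1..n}) : bool :=
  [forall i : 'I_n, (m i <= 1)%N].

Definition sqfree_quad_binomial (K : fieldType) (n : nat) (g : {mpoly K[n]})
  : Prop :=
  exists m1 m2 : 'X_{1..n},
    [/\ squarefree_mono m1 && squarefree_mono m2, mdeg m1 = 2%N, mdeg m2 = 2%N,
       m1 != m2 & g = 'X_[m1] - 'X_[m2]].

(* monomials of the initial ideal in_le(I) (I an ideal, so the set of leading
   monomials of elements of I is closed under multiples) *)
Definition in_initial (K : fieldType) (n : nat) (le : rel 'X_{1..n})
  (I : pred {mpoly K[n]}) (m : 'X_{1..n}) : Prop :=
  exists2 f, I f & is_lm le f m.

(* in_le(I) is a squarefree monomial ideal: generated by squarefree monomials *)
Definition squarefree_initial (K : fieldType) (n : nat) (le : rel 'X_{1..n})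
  (I : pred {mpoly K[n]}) : Prop :=
  forall m, in_initial le I m ->
    exists m', [/\ in_initial le I m', squarefree_mono m' & (m' <= m)%MM].

From HB Require Import structures.
From mathcomp Require Import all_boot all_order all_algebra.
From mathcomp Require Import mpoly.
From mathcomp Require Import zify.
Set Implicit Arguments. Unset Strict Implicit. Unset Printing Implicit Defensive.
Import Order.TTheory GRing.Theory.

(* In a tree every edge is a bridge, so A|B |-> Cut(A|B) is a bijection onto
   all subsets of E(T); hence phi_T(q_P) = prod_(e in P) s_e prod_(e notin P) t_e
   with P ranging over the Boolean lattice of subsets of E(T), and two monomials
   in the q's have the same image iff they have the same degree and every edge
   lies in the same number of their cut sets.  Replacing an incomparable pair
   q_P q_Q by q_(P :&: Q) q_(P :|: Q) preserves the image and strictly lowers the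
   weight sum_i (|E|^2 - |P_i|^2), and a monomial supported on a chain is
   determined by its image.  So for the weight order the leading monomial of a
   kernel element is never a chain, i.e. it is divisible by the leading term
   q_P q_Q of one of the squarefree quadrics q_P q_Q - q_(P :&: Q) q_(P :|: Q). *)

Section Cuts.
Variables (V : finType) (E : rel V).

Lemma edgesP e : reflect (exists x y, E x y /\ e = [set x; y]) (e \in edges E).
Proof.
apply: (iffP imset2P).
  by case=> x y _; rewrite inE => /andP[_ Exy] ->; exists x, y.
by case=> x [y [Exy ->]]; exists x y => //; rewrite inE Exy.
Qed.

Lemma edge_tP (e : edge_t E) : exists x y, E x y /\ val e = [set x; y].
Proof. by case: e => e /= /edgesP. Qed.

Definition upart_of (A : {set V}) : upart V.
Proof. by exists [set A; ~: A]; apply/existsP; exists A. Defined.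

Lemma upart_ofP (P : upart V) : exists A, P = upart_of A.
Proof.
case: P => P HP; case/existsP: (HP) => A /eqP eP.
by exists A; apply: val_inj.
Qed.

Lemma in_cut_upart_of A x y :
  in_cut (upart_of A) [set x; y] = ((x \in A) != (y \in A)).
Proof.
apply/existsP/idP.
  case=> A' /andP[+ /existsP[i /andP[+ /existsP[j /andP[+ /andP[]]]]]].
  rewrite !inE.
  by case/orP=> /eqP -> /orP[] /eqP -> /orP[] /eqP ->; rewrite ?inE; do 2 case: (_ \in A).
case Ex: (x \in A); case Ey: (y \in A) => // _; exists A; rewrite /= !inE eqxx /=.
  apply/existsP; exists x; rewrite !inE eqxx /=.
  by apply/existsP; exists y; rewrite !inE eqxx Ex Ey orbT.
apply/existsP; exists y; rewrite !inE eqxx orbT /=.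
by apply/existsP; exists x; rewrite !inE eqxx Ex Ey.
Qed.

Definition cut_set (P : upart V) : {set edge_t E} := [set e | in_cut P (val e)].

Lemma cut_set_upart_of A (e : edge_t E) x y : val e = [set x; y] ->
  (e \in cut_set (upart_of A)) = ((x \in A) != (y \in A)).
Proof. by move=> ev; rewrite inE ev in_cut_upart_of. Qed.

Lemma cut_set0 : cut_set (upart_of set0) = set0.
Proof.
apply/setP => e; have [x [y [_ ev]]] := edge_tP e.
by rewrite (cut_set_upart_of _ ev) !inE.
Qed.

Lemma cut_set_symdiff P Q :
  exists R, cut_set R = (cut_set P :\: cut_set Q) :|: (cut_set Q :\: cut_set P).
Proof.
have [A ->] := upart_ofP P; have [B ->] := upart_ofP Q.
exists (upart_of [set x | (x \in A) != (x \in B)]); apply/setP => e.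
have [x [y [_ ev]]] := edge_tP e.
by rewrite in_setU !in_setD !(cut_set_upart_of _ ev) !inE; do 4 case: (_ \in _).
Qed.

Hypothesis tree : is_tree E.

Let Esym : ssrbool.symmetric E. Proof. by case: tree => [[]]. Qed.
Let Eirr : ssrbool.irreflexive E. Proof. by case: tree => [[]]. Qed.

Lemma tree_edge_bridge u v : E u v ->
  ~~ connect [rel x y | E x y && ([set x; y] != [set u; v])] u v.
Proof.
move=> Euv; apply/negP => /connectP[p pp lp].
case: (shortenP pp) lp => p' pp' up' _ lp'.
have cyc : ucycle E (u :: p').
  rewrite /ucycle up' andbT /cycle rcons_path -lp' Esym Euv andbT.
  by apply: sub_path pp' => x y /andP[].
case: tree => _ [_ /(_ _ cyc)].
case: p' pp' {up' cyc} lp' => [|w [|w' p']] //= => [_ uv|/andP[/andP[_ +] _] wv _].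
  by move: Euv; rewrite uv Eirr.
by rewrite wv eqxx.
Qed.

Lemma cut_set1 (e : edge_t E) : exists P, cut_set P = [set e].
Proof.
have [u [v [Euv ev]]] := edge_tP e.
pose E' := [rel x y | E x y && ([set x; y] != [set u; v])].
have E'sym : connect_sym E'.
  by apply: sym_connect_sym => x y; rewrite /E' /= Esym setUC.
exists (upart_of [set x | connect E' u x]); apply/setP => f.
have [x [y [Exy fv]]] := edge_tP f.
rewrite (cut_set_upart_of _ fv) !inE.
have [fe|nfe] := eqVneq f e.
  have nuv := tree_edge_bridge Euv; move: fv; rewrite fe ev => /esym/setP exy.
  have /set2P xuv : x \in [set u; v] by rewrite -exy set21.
  have /set2P yuv : y \in [set u; v] by rewrite -exy set22.
  have nxy : x != y by apply: contraTneq Exy => ->; rewrite Eirr.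
  by case: xuv yuv nxy => -> [] -> //; rewrite ?eqxx // connect0 (negbTE nuv).
have E'xy : E' x y.
  rewrite /E' /= Exy -fv -ev; apply: contra nfe => /eqP efv.
  by apply/eqP/val_inj.
by have := connect_closed E'sym u E'xy; rewrite !inE => ->; rewrite eqxx.
Qed.

Lemma cut_set_surj S : exists P, cut_set P = S.
Proof.
have [k] := ubnP #|S|; elim: k S => // k IH S.
have [->|[e eS]] := set_0Vmem S => [_|]; first by exists (upart_of set0); exact: cut_set0.
rewrite (cardsD1 e S) eS ltnS => /IH[P HP].
have [Q HQ] := cut_set1 e; have [R HR] := cut_set_symdiff P Q.
exists R; rewrite HR HP HQ; apply/setP => f; rewrite !inE.
by have [->|] := eqVneq f e; rewrite ?eS //= andbF orbF.
Qed.

Lemma cut_set_inj : injective cut_set.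
Proof.
move=> P Q; have [A ->] := upart_ofP P; have [B ->] := upart_ofP Q => AB.
pose D := [set x | (x \in A) != (x \in B)].
have closedD : closed E D.
  move=> x y Exy; have exy : [set x; y] \in edges E by apply/edgesP; exists x, y.
  pose e : edge_t E := exist (fun s => s \in edges E) _ exy.
  have := congr1 (fun S : {set edge_t E} => e \in S) AB.
  by rewrite /= !(@cut_set_upart_of _ e x y) // !inE; do 4 case: (_ \in _).
have D_const x y : (x \in D) = (y \in D).
  by case: tree => _ [conn _]; exact: closed_connect closedD _ _ (conn x y).
have [x0 _ | V0] := pickP (@predT V); last first.
  by congr upart_of; apply/setP => x; have := V0 x.
apply: val_inj => /=; case x0D : (x0 \in D).
  suff -> : B = ~: A by rewrite setCK setUC.
  by apply/setP => y; move: (D_const x0 y); rewrite x0D !inE; do 2 case: (_ \in _).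
suff -> : B = A by [].
by apply/setP => y; move: (D_const x0 y); rewrite x0D !inE; do 2 case: (_ \in _).
Qed.

End Cuts.

Section WeightOrder.
Variables (n : nat) (w : 'I_n -> nat).

Definition mweight (m : 'X_{1..n}) : nat := \sum_i m i * w i.

Lemma mweightD m1 m2 : mweight (m1 + m2)%MM = mweight m1 + mweight m2.
Proof. by rewrite /mweight -big_split; apply: eq_bigr => i _; rewrite mnmDE mulnDl. Qed.

Lemma mweight0 : mweight 0%MM = 0.
Proof. by rewrite /mweight big1 // => i _; rewrite mnm0E. Qed.

Lemma mweightU k : mweight U_(k)%MM = w k.
Proof.
rewrite /mweight (bigD1 k) //= big1 ?addn0; first by rewrite mnm1E eqxx mul1n.
by move=> i /negbTE ik; rewrite mnm1E eq_sym ik.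
Qed.

Definition weight_le : rel 'X_{1..n} := fun m1 m2 =>
  (mweight m1 < mweight m2) || ((mweight m1 == mweight m2) && (m1 <= m2)%O).

Lemma weight_le_mweight m1 m2 : weight_le m1 m2 -> mweight m1 <= mweight m2.
Proof. by case/orP => [/ltnW //|/andP[/eqP -> _]]. Qed.

Lemma weight_le_total : ssrbool.total weight_le.
Proof.
move=> m1 m2; rewrite /weight_le eq_sym.
by case: ltngtP => //= _; exact: le_total.
Qed.

Lemma weight_le_monomial_order : monomial_order weight_le.
Proof.
split; [split|split] => //.
- by move=> m; rewrite /weight_le eqxx lexx orbT.
- move=> m1 m2; rewrite /weight_le.
  by case: ltngtP => //= _ /andP[l1 l2]; apply: le_anti; rewrite l1 l2.
- move=> m2 m1 m3; rewrite /weight_le.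
  case: (ltngtP (mweight m1)) => //= h12; case: (ltngtP (mweight m2)) => //= h23.
  + by rewrite (ltn_trans h12 h23).
  + by rewrite -h23 h12.
  + by rewrite h12 h23.
  + by move=> l1 l2; rewrite h12 h23 eqxx (le_trans l1 l2) orbT.
- exact: weight_le_total.
- by move=> m; rewrite /weight_le mweight0 le0m andbT orbC -leq_eqVlt.
- by move=> m1 m2 m; rewrite /weight_le !mweightD ltn_add2r eqn_add2r lemc_add2l.
Qed.

End WeightOrder.

Lemma mdeg_mweight n (m : 'X_{1..n}) : mdeg m = mweight (fun=> 1) m.
Proof. by rewrite mdegE /mweight; apply: eq_bigr => i _; rewrite muln1. Qed.

Lemma seq_max_exists (T : eqType) (le : rel T) (s : seq T) :
  ssrbool.total le -> ssrbool.transitive le -> s != [::] ->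
  exists2 x, x \in s & forall y, y \in s -> le y x.
Proof.
move=> le_total le_trans; have le_refl x : le x x by rewrite -[le x x]orbb le_total.
elim: s => // a s IH _; have [->|/IH[x xs xmax]] := eqVneq s [::].
  by exists a => [|y]; rewrite !inE // => /eqP ->.
have [ax|xa] := orP (le_total a x).
  by exists x => [|y]; rewrite inE ?xs ?orbT // => /orP[/eqP ->|/xmax].
by exists a => [|y]; rewrite !inE ?eqxx // => /orP[/eqP ->|/xmax/le_trans->].
Qed.

Lemma mnm_addUU_le n (m : 'X_{1..n}) i j :
  i != j -> 0 < m i -> 0 < m j -> (U_(i) + U_(j) <= m)%MM.
Proof.
move=> ij mi mj; apply/mnm_lepP => r; rewrite mnmDE !mnm1E.
case: (eqVneq i r) => [ir|_]; case: (eqVneq j r) => [jr|_] //=; try by rewrite -?ir -?jr.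
by rewrite ir jr eqxx in ij.
Qed.

Lemma squarefree_mono_addUU n (i j : 'I_n) : i != j -> squarefree_mono (U_(i) + U_(j))%MM.
Proof.
move=> ij; apply/forallP => r; rewrite mnmDE !mnm1E.
case: (eqVneq i r) => [ir|_]; case: (eqVneq j r) => [jr|_] //=.
by rewrite ir jr eqxx in ij.
Qed.

Section Binomials.
Variables (K : fieldType) (n : nat).
Local Open Scope ring_scope.

Lemma prod_mpolyX (I : finType) (F : I -> 'X_{1..n}) :
  \prod_i ('X_[F i] : {mpoly K[n]}) = 'X_[\big[+%MM/0%MM]_i F i].
Proof.
apply/esym/(big_morph (fun m => 'X_[m] : {mpoly K[n]})); [exact: mpolyXD|exact: mpolyX0].
Qed.

Lemma lm_exists (le : rel 'X_{1..n}) (f : {mpoly K[n]}) :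
  monomial_order le -> f != 0 -> exists m, is_lm le f m.
Proof.
case=> -[_ _ le_trans le_total] _ nf.
have [|m mf mmax] := @seq_max_exists _ le (msupp f) le_total le_trans; last by exists m.
by rewrite msupp_eq0.
Qed.

Lemma msupp_binomial (a b m : 'X_{1..n}) :
  m \in msupp ('X_[a] - 'X_[b] : {mpoly K[n]}) -> m = a \/ m = b.
Proof.
rewrite mcoeff_msupp mcoeffB !mcoeffX.
have [->|_] := eqVneq a m; first by left.
by have [->|_] := eqVneq b m; [right | rewrite subrr eqxx].
Qed.

Lemma is_lm_binomial (le : rel 'X_{1..n}) (a b : 'X_{1..n}) :
  ssrbool.reflexive le -> a != b -> le b a -> is_lm le ('X_[a] - 'X_[b] : {mpoly K[n]}) a.
Proof.
move=> le_refl ab ba; split=> [|m /msupp_binomial[] -> //].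
by rewrite mcoeff_msupp mcoeffB !mcoeffX eqxx [b == a]eq_sym (negbTE ab) subr0 oner_neq0.
Qed.

Lemma squarefree_initial_groebner (le : rel 'X_{1..n}) (I : pred {mpoly K[n]})
    (G : seq {mpoly K[n]}) :
  ssrbool.antisymmetric le -> groebner_basis le I G ->
  (forall g, g \in G -> sqfree_quad_binomial g) -> squarefree_initial le I.
Proof.
move=> le_anti [GI Glm] Gsqf m [f If [mf mmax]].
have nf : f != 0 by apply: contraTneq mf => ->; rewrite msupp0.
have [g gG [m' [mg [[m'f m'max] lmg mgm]]]] := Glm f If nf.
have <- : m' = m by apply: le_anti; rewrite mmax // m'max.
exists mg; split => //; first by exists g => //; exact: GI.
have [m1 [m2 [/andP[s1 s2] _ _ _ eg]]] := Gsqf g gG.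
by case: lmg => + _; rewrite eg => /msupp_binomial[] ->.
Qed.

End Binomials.

Section BooleanLattice.
Variables (T : finType) (n : nat) (C : 'I_n -> {set T}).
Hypothesis C_inj : injective C.
Hypothesis C_surj : forall S, exists i, C i = S.

Definition occ (x : T) : 'X_{1..n} -> nat := mweight (fun i => x \in C i : nat).

Definition same_fiber (m1 m2 : 'X_{1..n}) : Prop :=
  mdeg m1 = mdeg m2 /\ forall x, occ x m1 = occ x m2.

Definition chain_mono (m : 'X_{1..n}) : bool := [forall i, forall j,
  (0 < m i) ==> (0 < m j) ==> (C i \subset C j) || (C j \subset C i)].

Definition incomparable (i j : 'I_n) : bool :=
  ~~ (C i \subset C j) && ~~ (C j \subset C i).

Definition cmeet (i j : 'I_n) : 'I_n := odflt i [pick k | C k == C i :&: C j].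
Definition cjoin (i j : 'I_n) : 'I_n := odflt i [pick k | C k == C i :|: C j].

Lemma cmeetE i j : C (cmeet i j) = C i :&: C j.
Proof.
rewrite /cmeet; case: pickP => [k /eqP //|none].
by have [k Ck] := C_surj (C i :&: C j); have := none k; rewrite Ck eqxx.
Qed.

Lemma cjoinE i j : C (cjoin i j) = C i :|: C j.
Proof.
rewrite /cjoin; case: pickP => [k /eqP //|none].
by have [k Ck] := C_surj (C i :|: C j); have := none k; rewrite Ck eqxx.
Qed.

(* Replacing an incomparable pair by its meet and join keeps the fiber and
   strictly decreases this weight, since |A :&: B|^2 + |A :|: B|^2 > |A|^2 + |B|^2. *)
Definition size_weight (i : 'I_n) : nat := #|T| ^ 2 - #|C i| ^ 2.

Local Notation weight := (mweight size_weight).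

Lemma same_fiber_meet_join i j :
  same_fiber (U_(cmeet i j) + U_(cjoin i j)) (U_(i) + U_(j)).
Proof.
split; first by rewrite !mdegD !mdeg1.
by move=> x; rewrite /occ !mweightD !mweightU cmeetE cjoinE !inE; do 2 case: (_ \in _).
Qed.

Lemma weight_meet_join_lt i j : incomparable i j ->
  weight (U_(cmeet i j) + U_(cjoin i j)) < weight (U_(i) + U_(j)).
Proof.
case/andP => nij nji; rewrite !mweightD !mweightU /size_weight cmeetE cjoinE.
have hU := cardsUI (C i) (C j).
have hi : #|C i| = #|C i :&: C j| + #|C i :\: C j| by rewrite cardsID.
have hj : #|C j| = #|C i :&: C j| + #|C j :\: C i| by rewrite setIC cardsID.
have p1 : 0 < #|C i :\: C j| by rewrite card_gt0 setD_eq0.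
have p2 : 0 < #|C j :\: C i| by rewrite card_gt0 setD_eq0.
have bU : #|C i :|: C j| <= #|T| by apply: max_card.
nia.
Qed.

Lemma incomparable_neq i j : incomparable i j -> i != j.
Proof. by apply: contraTneq => ->; rewrite /incomparable subxx. Qed.

Lemma meet_join_neq i j : incomparable i j -> cmeet i j != cjoin i j.
Proof.
case/andP => nij _; apply: contra nij => /eqP/(congr1 C).
by rewrite cmeetE cjoinE => /setP eqIU; apply/subsetP => x xi; have := eqIU x; rewrite !inE xi.
Qed.

Lemma not_chain_mono m : ~~ chain_mono m ->
  exists i j, [/\ 0 < m i, 0 < m j & incomparable i j].
Proof.
move/forallPn => [i /forallPn[j]]; rewrite !negb_imply negb_or => /and3P[mi mj ij].
by exists i, j.
Qed.

Lemma chain_mono_le (m m' : 'X_{1..n}) : (forall r, m' r <= m r) -> chain_mono m -> chain_mono m'.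
Proof.
move=> le /forallP H; apply/forallP => i; apply/forallP => j.
apply/implyP => mi; apply/implyP => mj.
by have := forallP (H i) j; rewrite (leq_trans mi (le i)) (leq_trans mj (le j)).
Qed.

Lemma same_fiber_trans m1 m2 m3 :
  same_fiber m1 m2 -> same_fiber m2 m3 -> same_fiber m1 m3.
Proof. by case=> h1 h2 [h3 h4]; split => [|x]; rewrite ?h1 ?h2. Qed.

Lemma same_fiber_add2l r m1 m2 :
  same_fiber (r + m1) (r + m2) <-> same_fiber m1 m2.
Proof.
rewrite /same_fiber !mdegD; split=> -[h1 h2].
  by split=> [|x]; [exact: addnI h1 | move: (h2 x); rewrite /occ !mweightD => /addnI].
by split=> [|x]; rewrite ?h1 // /occ !mweightD; congr addn; exact: h2.
Qed.

Lemma straighten m : exists m', [/\ chain_mono m', same_fiber m' m,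
  weight m' <= weight m & (~~ chain_mono m -> weight m' < weight m)].
Proof.
have [N] := ubnP (weight m); elim: N m => // N IH m.
have [chm _|/not_chain_mono[i [j [mi mj ij]]] wm] := boolP (chain_mono m).
  by exists m; split.
have [r mE] : exists r, m = (r + (U_(i) + U_(j)))%MM.
  by exists (m - (U_(i) + U_(j)))%MM; rewrite submK // mnm_addUU_le ?incomparable_neq.
subst m.
have lt_swap :
    weight (r + (U_(cmeet i j) + U_(cjoin i j)))%MM < weight (r + (U_(i) + U_(j)))%MM.
  by rewrite !(mweightD _ r) ltn_add2l weight_meet_join_lt.
have [|m' [chm' fib' le' _]] := IH (r + (U_(cmeet i j) + U_(cjoin i j)))%MM.
  exact: leq_trans lt_swap _.
exists m'; split => //; last by move=> _; exact: leq_ltn_trans le' lt_swap.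
- by apply: same_fiber_trans fib' _; apply/same_fiber_add2l/same_fiber_meet_join.
- exact: leq_trans le' (ltnW lt_swap).
Qed.

Lemma chain_mono_top m : chain_mono m -> m != 0%MM ->
  exists2 i, 0 < m i & C i = [set x | 0 < occ x m].
Proof.
move=> chm nm.
have [i0 mi0] : exists i, 0 < m i.
  apply/existsP; apply: contraR nm => /existsPn H; apply/eqP/mnmP => r.
  by move: (H r); rewrite mnm0E lt0n negbK => /eqP.
case: (@arg_maxnP _ i0 (fun i => 0 < m i) (fun i => #|C i|) mi0) => i mi imax.
exists i => //; apply/setP => x; rewrite inE.
apply/idP/idP => [xi|].
  by rewrite /occ /mweight (bigD1 i) //= xi muln1 (leq_trans mi (leq_addr _ _)).
case: (pickP (fun j => (0 < m j) && (x \in C j))) => [j /andP[mj xj]|none].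
  have := forallP (forallP chm i) j; rewrite mi mj /= => /orP[sij|sji].
    by have /eqP -> : C i == C j by rewrite eqEcard sij; exact: imax.
  by move=> _; exact: subsetP sji _ xj.
rewrite /occ /mweight big1 // => j _.
by move: (none j); rewrite lt0n; case: eqP => [->|] //= _ ->; rewrite muln0.
Qed.

Lemma chain_mono_fiber_inj m1 m2 :
  chain_mono m1 -> chain_mono m2 -> same_fiber m1 m2 -> m1 = m2.
Proof.
have [d] := ubnP (mdeg m1); elim: d m1 m2 => // d IH m1 m2 Hd ch1 ch2 fib.
have [m10|nm1] := eqVneq m1 0%MM.
  by have := fib.1; rewrite m10 mdeg0 => /esym/eqP; rewrite mdeg_eq0 => /eqP ->.
have nm2 : m2 != 0%MM by rewrite -mdeg_eq0 -fib.1 mdeg_eq0.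
have [i mi1 Ci] := chain_mono_top ch1 nm1; have [i' mi2 Ci'] := chain_mono_top ch2 nm2.
have ii' : i = i' by apply: C_inj; rewrite Ci Ci'; apply/setP => x; rewrite !inE fib.2.
subst i'.
have U_le (m : 'X_{1..n}) : 0 < m i -> (U_(i) <= m)%MM.
  by move=> mi; apply/mnm_lepP => r; rewrite mnm1E; case: eqP => [<-|].
have sub_le (m : 'X_{1..n}) r : (m - U_(i))%MM r <= m r by rewrite mnmBE leq_subr.
rewrite -(submK (U_le _ mi1)) -(submK (U_le _ mi2)); congr (_ + _)%MM.
apply: IH; [|exact: chain_mono_le (sub_le m1) ch1|exact: chain_mono_le (sub_le m2) ch2|].
  by move: Hd; rewrite -{1}(submK (U_le _ mi1)) mdegD mdeg1 addn1 ltnS.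
by apply/(@same_fiber_add2l U_(i)%MM); rewrite !(addmC U_(i)%MM) !submK ?U_le.
Qed.

Lemma chain_mono_weight_lt m1 m2 :
  chain_mono m1 -> same_fiber m2 m1 -> m2 != m1 -> weight m1 < weight m2.
Proof.
move=> ch1 fib nm21.
have [m3 [ch3 fib3 _ lt3]] := straighten m2.
have <- : m3 = m1 by apply: chain_mono_fiber_inj (same_fiber_trans fib3 fib).
apply: lt3; apply: contra nm21 => ch2.
by apply/eqP/chain_mono_fiber_inj.
Qed.

End BooleanLattice.

Section CutIdeal.
Variables (K : fieldType) (V : finType) (E : rel V).
Hypothesis tree : is_tree E.
(* Needed to read the degree of a monomial off its image: for any edge e it is
   the total degree in s_e and t_e. *)
Hypothesis has_edge : 0 < #|edges E|.

Local Notation n := #|{: upart V}|.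
Local Notation M := #|{: (edge_t E + edge_t E)%type}|.

Definition cut_of (i : 'I_n) : {set edge_t E} := cut_set E (enum_val i).

Lemma cut_of_inj : injective cut_of.
Proof. by move=> i j /(cut_set_inj tree)/enum_val_inj. Qed.

Lemma cut_of_surj S : exists i, cut_of i = S.
Proof. by have [P <-] := cut_set_surj tree S; exists (enum_rank P); rewrite /cut_of enum_rankK. Qed.

Definition cut_mono (i : 'I_n) : 'X_{1..M} :=
  (\sum_e U_(enum_rank (if e \in cut_of i then inl e else inr e)))%MM.

Definition phi_mono (m : 'X_{1..n}) : 'X_{1..M} := (\sum_i cut_mono i *+ m i)%MM.

Local Open Scope ring_scope.

Lemma phi_qE i : phi_q K E i = 'X_[cut_mono i].
Proof.
rewrite /phi_q /cut_mono -prod_mpolyX; apply: eq_bigr => e _.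
by rewrite /cut_of /cut_set inE; case: in_cut.
Qed.

Lemma mmap1_phi_q m : mmap1 (phi_q K E) m = 'X_[phi_mono m].
Proof. by rewrite /mmap1 /phi_mono -prod_mpolyX; apply: eq_bigr => i _; rewrite phi_qE mpolyXn. Qed.

Lemma phi_GX m : phi_G E ('X_[m] : {mpoly K[n]}) = 'X_[phi_mono m].
Proof. by rewrite /phi_G mmapX mmap1_phi_q. Qed.

Lemma phi_GE (f : {mpoly K[n]}) :
  phi_G E f = \sum_(m <- msupp f) (f@_m)%:MP * 'X_[phi_mono m].
Proof. by apply: eq_bigr => m _; rewrite mmap1_phi_q. Qed.

Lemma cut_ideal_fiber_pair (f : {mpoly K[n]}) m :
  cut_ideal E f -> m \in msupp f ->
  exists2 m', m' \in msupp f & m' != m /\ phi_mono m' = phi_mono m.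
Proof.
move=> /eqP phif0 mf.
have [/hasP[m' m'f /andP[m'm /eqP]]|/hasPn others] :=
  boolP (has (fun m' => (m' != m) && (phi_mono m' == phi_mono m)) (msupp f)).
  by exists m'.
have := congr1 (mcoeff (phi_mono m)) phif0; rewrite phi_GE mcoeff0 raddf_sum /=.
rewrite (big_rem m) //= big_seq big1 => [|m'].
  by rewrite addr0 mcoeffCM mcoeffX eqxx mulr1 => /eqP; rewrite mcoeff_eq0 mf.
rewrite (mem_rem_uniq _ (msupp_uniq f)) inE => /andP[m'm m'f].
have := others m' m'f; rewrite m'm /= => /negbTE phim'.
by rewrite mcoeffCM mcoeffX phim' mulr0.
Qed.

Lemma cut_monoE i x : cut_mono i (enum_rank x) =
  match x with inl e => e \in cut_of i | inr e => e \notin cut_of i end.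
Proof.
have e_x : exists e, x = inl e \/ x = inr e by case: x => e; exists e; auto.
have [e {}e_x] := e_x; rewrite /cut_mono mnm_sumE (bigD1 e) //= big1 ?addn0 => [|f fe].
  by rewrite mnm1E (inj_eq enum_rank_inj); case: e_x => ->; case: (e \in _); rewrite ?eqxx.
by rewrite mnm1E (inj_eq enum_rank_inj); case: e_x => ->; case: ifP => _ /=;
  rewrite ?(inj_eq inl_inj) ?(inj_eq inr_inj) ?(negbTE fe).
Qed.

Lemma phi_mono_s m e : phi_mono m (enum_rank (inl e)) = occ cut_of e m.
Proof.
by rewrite /phi_mono mnm_sumE; apply: eq_bigr => i _; rewrite mulmnE cut_monoE mulnC.
Qed.

Lemma phi_mono_st m e :
  (phi_mono m (enum_rank (inl e)) + phi_mono m (enum_rank (inr e)))%N = mdeg m.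
Proof.
rewrite mdeg_mweight /phi_mono !mnm_sumE -big_split; apply: eq_bigr => i _.
by rewrite /= !mulmnE !cut_monoE; case: (e \in _); rewrite /= ?mul1n ?mul0n ?addn0 ?muln1.
Qed.

Lemma phi_mono_eq m1 m2 : phi_mono m1 = phi_mono m2 <-> same_fiber cut_of m1 m2.
Proof.
split => [phi12|[deg12 occ12]].
  have [s se] := card_gt0P has_edge; pose e : edge_t E := exist _ s se.
  split => [|x]; last by rewrite -!phi_mono_s phi12.
  by rewrite -(phi_mono_st m1 e) -(phi_mono_st m2 e) phi12.
apply/mnmP => r; rewrite -(enum_valK r); case: (enum_val r) => e.
  by rewrite !phi_mono_s occ12.
apply/(@addnI (phi_mono m1 (enum_rank (inl e)))).
by rewrite phi_mono_st {1}phi_mono_s occ12 -phi_mono_s phi_mono_st.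
Qed.

Definition cut_order : rel 'X_{1..n} := weight_le (size_weight cut_of).

Lemma lm_cut_ideal_not_chain (f : {mpoly K[n]}) m :
  cut_ideal E f -> is_lm cut_order f m -> ~~ chain_mono cut_of m.
Proof.
move=> If [mf mmax]; apply/negP => chm.
have [m' m'f [m'm /phi_mono_eq fib]] := cut_ideal_fiber_pair If mf.
have := weight_le_mweight (mmax _ m'f).
by rewrite leqNgt (chain_mono_weight_lt cut_of_inj cut_of_surj chm fib m'm).
Qed.

Definition cut_binomial (i j : 'I_n) : {mpoly K[n]} :=
  'X_[U_(i) + U_(j)]%MM - 'X_[U_(cmeet cut_of i j) + U_(cjoin cut_of i j)]%MM.

Definition cut_groebner : seq {mpoly K[n]} :=
  [seq cut_binomial p.1 p.2 | p <- enum {: 'I_n * 'I_n} & incomparable cut_of p.1 p.2].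

Lemma cut_groebnerP g :
  g \in cut_groebner -> exists i j, incomparable cut_of i j /\ g = cut_binomial i j.
Proof. by case/mapP => -[i j]; rewrite mem_filter /= => /andP[ij _] ->; exists i, j. Qed.

Lemma cut_binomial_in_ideal i j : cut_ideal E (cut_binomial i j).
Proof.
rewrite /cut_ideal /cut_binomial /phi_G mmapB -!/(phi_G _ _) !phi_GX.
by rewrite (proj2 (phi_mono_eq _ _) (same_fiber_meet_join cut_of_surj i j)) subrr.
Qed.

Lemma is_lm_cut_binomial i j : incomparable cut_of i j ->
  is_lm cut_order (cut_binomial i j) (U_(i) + U_(j))%MM.
Proof.
move=> ij; have lt := weight_meet_join_lt cut_of_surj ij.
apply: is_lm_binomial; first by case: (weight_le_monomial_order (size_weight cut_of)) => -[].
  by apply: contraTneq lt => ->; rewrite ltnn.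
by rewrite /cut_order /weight_le lt.
Qed.

Lemma cut_binomial_sqfree i j : incomparable cut_of i j ->
  sqfree_quad_binomial (cut_binomial i j).
Proof.
move=> ij; exists (U_(i) + U_(j))%MM, (U_(cmeet cut_of i j) + U_(cjoin cut_of i j))%MM.
have nij := incomparable_neq ij; have nkl := meet_join_neq cut_of_surj ij.
rewrite !squarefree_mono_addUU // !mdegD !mdeg1; split => //.
by apply: contraTneq (weight_meet_join_lt cut_of_surj ij) => ->; rewrite ltnn.
Qed.

Lemma cut_groebner_basis : groebner_basis cut_order (@cut_ideal K V E) cut_groebner.
Proof.
split=> [g /cut_groebnerP[i [j [_ ->]]]|f If nf]; first exact: cut_binomial_in_ideal.
have [m lm] := lm_exists (weight_le_monomial_order (size_weight cut_of)) nf.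
have [i [j [mi mj ij]]] := not_chain_mono (lm_cut_ideal_not_chain If lm).
exists (cut_binomial i j).
  by apply/mapP; exists (i, j); rewrite // mem_filter ij mem_enum.
exists m, (U_(i) + U_(j))%MM; split => //; first exact: is_lm_cut_binomial.
exact: mnm_addUU_le (incomparable_neq ij) mi mj.
Qed.

End CutIdeal.

Theorem corollary4p3 (K : fieldType) (V : finType) (E : rel V) :
  is_tree E -> (2 <= #|edges E|)%N ->
  exists le : rel 'X_{1..#|{: upart V}|},
    monomial_order le /\
    (exists G : seq {mpoly K[#|{: upart V}|]},
       groebner_basis le (@cut_ideal K V E) G /\
       (forall g, g \in G -> sqfree_quad_binomial g)) /\
    squarefree_initial le (@cut_ideal K V E).
Proof.
move=> tree /ltnW has_edge.
have order := weight_le_monomial_order (size_weight (cut_of E)).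
have gb := cut_groebner_basis K tree has_edge.
have sqf : forall g, g \in cut_groebner K E -> sqfree_quad_binomial g.
  by move=> g /cut_groebnerP[i [j [ij ->]]]; exact: cut_binomial_sqfree.
exists (cut_order E); split => //; split; first by exists (cut_groebner K E).
by apply: squarefree_initial_groebner gb sqf; case: order => -[].
Qed.
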